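(* Let $L$ be a finite-dimensional Lie algebra over a field $F$ and let $M$ be a maximal subalgebra of $L$. Then the number $\dim(C/k(C))$, where $C$ is an ideal completion of $M$ in $L$, does not depend on the choice of the ideal completion $C$; that is, the ideal index $\eta(L:M)$ is well-defined.
   Context: For a nonzero subalgebra $B$ of $L$, the strict core $k(B)$ is the sum of all ideals of $L$ that are proper subalgebras of $B$ (it is $0$ if there are none). A subalgebra $C$ of $L$ is a completion of $M$ if $C\not\subseteq M$ but every proper subalgebra of $C$ that is an ideal of $L$ is contained in $M$. An ideal completion of $M$ is a completion of $M$ which is an ideal of $L$ (such exist for every maximal subalgebra). The ideal index $\eta(L:M)$ is defined as $\dim(C/k(C))$ for an ideal completion $C$ of $M$. *)

From HB Require Import structures.
From mathcomp Require Import all_boot all_order all_algebra.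
From Stdlib Require Import ClassicalEpsilon.
Set Implicit Arguments. Unset Strict Implicit. Unset Printing Implicit Defensive.
Import GRing.Theory.
Local Open Scope ring_scope.

Section Lie.
Variables (F : fieldType) (L : vectType F).

Definition is_lie_bracket (br : L -> L -> L) : Prop :=
  [/\ (forall y, linear (fun x => br x y)),
      (forall x, linear (br x)),
      (forall x, br x x = 0) &
      (forall x y z, br x (br y z) + br y (br z x) + br z (br x y) = 0)].

Variable br : L -> L -> L.

Definition is_subalgebra (U : {vspace L}) : Prop :=
  forall x y, x \in U -> y \in U -> br x y \in U.

Definition is_ideal (I : {vspace L}) : Prop :=
  forall x y, y \in I -> br x y \in I.

Definition is_maximal_subalgebra (M : {vspace L}) : Prop :=
  [/\ is_subalgebra M, M != fullv &
      forall U : {vspace L}, is_subalgebra U -> (M <= U)%VS -> U = M \/ U = fullv].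

(* K is the sum of all ideals of L that are proper subalgebras of B,
   i.e. the least subspace containing all of them (0 if there are none). *)
Definition is_strict_core (B K : {vspace L}) : Prop :=
  (forall I : {vspace L}, is_ideal I -> ((I <= B)%VS && (I != B)) -> (I <= K)%VS) /\
  (forall U : {vspace L},
     (forall I : {vspace L}, is_ideal I -> ((I <= B)%VS && (I != B)) -> (I <= U)%VS) ->
     (K <= U)%VS).

(* the strict core k(B) (this sum always exists; chosen classically) *)
Definition strict_core (B : {vspace L}) : {vspace L} :=
  epsilon (inhabits 0%VS) (is_strict_core B).

Definition is_completion (M C : {vspace L}) : Prop :=
  [/\ is_subalgebra C, ~ (C <= M)%VS &
      forall I : {vspace L}, is_subalgebra I -> is_ideal I -> ((I <= C)%VS && (I != C)) -> (I <= M)%VS].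

Definition is_ideal_completion (M C : {vspace L}) : Prop :=
  is_completion M C /\ is_ideal C.

(* dim (C / k(C)), with k(C) <= C *)
Definition ideal_index_of (C : {vspace L}) : nat :=
  (\dim C - \dim (strict_core C))%N.

End Lie.

(* If C1 <> C2 are ideal completions of M, then C1 :&: C2 is a proper ideal
   of L inside C1, hence lies in M.  As L = C2 + M, bracketing C1 :&: M with
   L lands in (C1 :&: C2) + (C1 :&: M), so C1 :&: M is an ideal of L; it is
   then the largest proper ideal of L in C1, i.e. k(C1) = C1 :&: M.  Hence
   dim (C1 / k(C1)) = dim ((C1 + M) / M) = dim L - dim M, and symmetrically
   for C2. *)
From mathcomp Require Import all_boot all_order all_algebra.
From Stdlib Require Import ClassicalEpsilon.
Set Implicit Arguments. Unset Strict Implicit. Unset Printing Implicit Defensive.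
Import GRing.Theory.
Local Open Scope ring_scope.

Section LieAlgebra.
Variables (F : fieldType) (L : vectType F) (br : L -> L -> L).
Hypothesis Hbr : is_lie_bracket br.

Lemma strict_coreE (B K : {vspace L}) :
  is_strict_core br B K -> strict_core br B = K.
Proof.
move=> coreK; have [ubK lubK] := coreK.
have [ub lub] : is_strict_core br B (strict_core br B).
  by apply: epsilon_spec; exists K.
by apply/eqP; rewrite eqEsubv lub //= lubK.
Qed.

Lemma ideal_capv (I J : {vspace L}) :
  is_ideal br I -> is_ideal br J -> is_ideal br (I :&: J)%VS.
Proof. by move=> idI idJ x y /memv_capP[yI yJ]; rewrite memv_cap idI ?idJ. Qed.

Lemma strict_core_completion (M C : {vspace L}) :
  is_completion br M C -> is_ideal br (C :&: M)%VS ->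
  strict_core br C = (C :&: M)%VS.
Proof.
move=> [_ nCM propC] idCM; apply: strict_coreE; split=> [I idI /andP[sIC neIC] | U ub].
  rewrite subv_cap sIC propC ?sIC //.
  by move=> x y _; apply: idI.
apply: ub; rewrite // capvSl /=; apply: contra_notN nCM => /eqP <-.
exact: capvSr.
Qed.

Lemma brDl x y z : br (x + y) z = br x z + br y z.
Proof. by case: Hbr => linl _ _ _; have := linl z 1 x y; rewrite !scale1r. Qed.

Lemma brDr x y z : br z (x + y) = br z x + br z y.
Proof. by case: Hbr => _ linr _ _; have := linr z 1 x y; rewrite !scale1r. Qed.

Lemma br_anticomm x y : br x y = - br y x.
Proof.
case: Hbr => _ _ br_diag _; apply/eqP; rewrite -addr_eq0.
by have := br_diag (x + y); rewrite brDl !brDr !br_diag add0r addr0 => ->.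
Qed.

Lemma ideal_brl (I : {vspace L}) x y :
  is_ideal br I -> x \in I -> br x y \in I.
Proof. by move=> idI xI; rewrite br_anticomm rpredN idI. Qed.

Lemma ideal_addv_maximal (M C : {vspace L}) :
  is_maximal_subalgebra br M -> is_ideal br C -> ~ (C <= M)%VS ->
  (C + M)%VS = fullv.
Proof.
move=> [subM _ maxM] idC nCM.
have subCM : is_subalgebra br (C + M)%VS.
  move=> _ _ /memv_addP[c cC [m mM ->]] /memv_addP[c' c'C [m' m'M ->]].
  rewrite brDl !brDr !addrA; apply: memv_add; last exact: subM.
  by rewrite !rpredD ?[br m _ \in _]idC // ideal_brl.
have [eCM|//] := maxM _ subCM (addvSr C M).
by case: nCM; rewrite -eCM addvSl.
Qed.

Lemma ideal_index_completion (M C : {vspace L}) :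
  is_maximal_subalgebra br M -> is_ideal_completion br M C ->
  is_ideal br (C :&: M)%VS ->
  ideal_index_of br C = (\dim (fullv : {vspace L}) - \dim M)%N.
Proof.
move=> maxM [complC idC] idCM; have [_ nCM _] := complC.
rewrite /ideal_index_of (strict_core_completion complC idCM).
rewrite -(ideal_addv_maximal maxM idC nCM) -(subnDr (\dim M) (\dim C)).
by rewrite -dimv_sum_cap [X in (X - _)%N]addnC subnDl.
Qed.

Section TwoCompletions.
Variables (M C1 C2 : {vspace L}).
Hypotheses (maxM : is_maximal_subalgebra br M)
  (compl1 : is_ideal_completion br M C1) (compl2 : is_ideal_completion br M C2)
  (neC12 : C1 != C2).

Lemma capv_completions_sub : (C1 :&: C2 <= M)%VS.
Proof.
have [[_ nC1M propC1] idC1] := compl1; have [[_ _ propC2] idC2] := compl2.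
have idC12 := ideal_capv idC1 idC2.
apply: propC1 => //; first by move=> x y _; apply: idC12.
rewrite capvSl /=; apply: contra_notN nC1M => /eqP eC12.
apply: propC2 => //; first by move=> x y _; apply: idC1.
by rewrite -{1}eC12 capvSr.
Qed.

Lemma ideal_capv_completion : is_ideal br (C1 :&: M)%VS.
Proof.
have [_ idC1] := compl1; have [[_ nC2M _] idC2] := compl2.
have [subM _ _] := maxM.
move=> x y /memv_capP[yC1 yM].
have : x \in (C2 + M)%VS by rewrite ideal_addv_maximal ?memvf.
case/memv_addP=> c cC2 [m mM ->]; rewrite brDl rpredD //.
  rewrite memv_cap idC1 //=; apply: (subvP capv_completions_sub).
  by rewrite memv_cap idC1 // ideal_brl.
by rewrite memv_cap idC1 // subM.
Qed.

Lemma ideal_index_two_completions :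
  ideal_index_of br C1 = (\dim (fullv : {vspace L}) - \dim M)%N.
Proof. exact: ideal_index_completion maxM compl1 ideal_capv_completion. Qed.

End TwoCompletions.

End LieAlgebra.

Theorem corollary2p2 (F : fieldType) (L : vectType F) (br : L -> L -> L)
  (Hbr : is_lie_bracket br) (M : {vspace L})
  (HM : is_maximal_subalgebra br M) (C1 C2 : {vspace L}) :
  is_ideal_completion br M C1 -> is_ideal_completion br M C2 ->
  ideal_index_of br C1 = ideal_index_of br C2.
Proof.
move=> compl1 compl2; have [-> // | neC12] := eqVneq C1 C2.
rewrite (ideal_index_two_completions Hbr HM compl1 compl2 neC12).
by rewrite (ideal_index_two_completions Hbr HM compl2 compl1) // eq_sym.
Qed.
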